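(* Let $\alpha>2$, and for $s_1,s_2>0$ define \[ f(s_1,s_2)=\frac{\int_0^\infty e^{-(s_1+s_2)x^{2/\alpha}}\frac{dx}{1+x}}{s_1\int_0^\infty x^{2/\alpha}e^{-(s_1+s_2)x^{2/\alpha}}\frac{dx}{1+x}}. \] Then the function $s\mapsto f(s,s)$ is monotonically decreasing on $(0,\infty)$. *)

From Stdlib Require Import Reals.
From Coquelicot Require Import Coquelicot.
Open Scope R_scope.

(* x^a for x >= 0 and a > 0, with the convention 0^a = 0
   (Stdlib's Rpower 0 a = 1 would be wrong at the single point 0). *)
Definition rpow (x a : R) : R := if Rlt_dec 0 x then Rpower x a else 0.

Definition I0 (alpha t : R) : R :=
  RInt_gen (fun x => exp (- t * rpow x (2 / alpha)) / (1 + x))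
           (at_point 0) (Rbar_locally p_infty).

Definition I1 (alpha t : R) : R :=
  RInt_gen (fun x => rpow x (2 / alpha) * exp (- t * rpow x (2 / alpha)) / (1 + x))
           (at_point 0) (Rbar_locally p_infty).

Definition fratio (alpha s1 s2 : R) : R :=
  I0 alpha (s1 + s2) / (s1 * I1 alpha (s1 + s2)).

From Stdlib Require Import Reals Lra.
From Coquelicot Require Import Coquelicot.
Open Scope R_scope.

(* Write c = 2/alpha and u = 2s. The substitution x = y / mu with mu^c = u turns the two
   integrals into B(mu) = int_0^oo e^{-y^c} dy/(mu+y) and A(mu) / u, with A(mu) the same
   integral weighted by y^c, so that f(s,s) = 2 B(mu) / A(mu). Since mu increases with s, it
   suffices that A/B, the mean of y^c for the weight e^{-y^c}/(mu+y), increases with mu: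
   passing from mu to nu > mu multiplies the weight by the increasing factor (mu+y)/(nu+y),
   which moves mass to the right. *)

Lemma rpow_exp_ln x a : 0 < x -> rpow x a = exp (a * ln x).
Proof. intros Hx; unfold rpow; destruct (Rlt_dec 0 x); [reflexivity | lra]. Qed.

Lemma rpow_le0 x a : x <= 0 -> rpow x a = 0.
Proof. intros Hx; unfold rpow; destruct (Rlt_dec 0 x); [lra | reflexivity]. Qed.

Lemma rpow_ge0 x a : 0 <= rpow x a.
Proof.
  destruct (Rlt_dec 0 x) as [Hx | Hx].
  - rewrite rpow_exp_ln by exact Hx; apply Rlt_le, exp_pos.
  - rewrite rpow_le0 by lra; lra.
Qed.

Lemma rpow_gt0 x a : 0 < x -> 0 < rpow x a.
Proof. intros Hx; rewrite rpow_exp_ln by exact Hx; apply exp_pos. Qed.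

Lemma rpow_1 x : 0 < x -> rpow x 1 = x.
Proof. intros Hx; rewrite rpow_exp_ln, Rmult_1_l by exact Hx; apply exp_ln, Hx. Qed.

Lemma rpow_rpow x a b : 0 < x -> rpow (rpow x a) b = rpow x (a * b).
Proof.
  intros Hx; rewrite (rpow_exp_ln (rpow x a)) by (apply rpow_gt0, Hx).
  rewrite !rpow_exp_ln, ln_exp by exact Hx; f_equal; ring.
Qed.

Lemma rpow_inv x a : 0 < x -> rpow (/ x) a = / rpow x a.
Proof.
  intros Hx; rewrite !rpow_exp_ln, ln_Rinv, <- exp_Ropp by (auto; apply Rinv_0_lt_compat, Hx).
  f_equal; ring.
Qed.

Lemma rpow_mult x y a : 0 < x -> 0 <= y -> rpow (x * y) a = rpow x a * rpow y a.
Proof.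
  intros Hx Hy; destruct (Req_dec y 0) as [-> | Hy0].
  - rewrite Rmult_0_r, rpow_le0 by lra; ring.
  - rewrite !rpow_exp_ln, ln_mult, <- exp_plus by nra; f_equal; ring.
Qed.

Lemma rpow_lt_compat x y a : 0 < a -> 0 <= x -> x < y -> rpow x a < rpow y a.
Proof.
  intros Ha Hx Hxy; destruct (Req_dec x 0) as [-> | Hx0].
  - rewrite rpow_le0 by lra; apply rpow_gt0; lra.
  - rewrite !rpow_exp_ln by lra; apply exp_increasing, Rmult_lt_compat_l; auto.
    apply ln_increasing; lra.
Qed.

Lemma rpow_1_l a : rpow 1 a = 1.
Proof. rewrite rpow_exp_ln, ln_1, Rmult_0_r by lra; apply exp_0. Qed.

Lemma rpow_ge1 x a : 0 < a -> 1 <= x -> 1 <= rpow x a.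
Proof.
  intros Ha Hx; rewrite <- (rpow_1_l a).
  destruct (Req_dec x 1) as [-> | Hx1]; [lra | apply Rlt_le, rpow_lt_compat; lra].
Qed.

Lemma rpow_surj m a : 0 < a -> 0 < m -> exists x, 0 < x /\ rpow x a = m.
Proof.
  intros Ha Hm; exists (exp (ln m / a)); split; [apply exp_pos |].
  rewrite rpow_exp_ln, ln_exp by apply exp_pos.
  replace (a * (ln m / a)) with (ln m) by (field; lra); apply exp_ln, Hm.
Qed.

(* Near 0 we use [rpow x a < eps] as soon as [x < eps^(1/a)]. *)
Lemma continuous_rpow a x : 0 < a -> 0 <= x -> continuous (fun y => rpow y a) x.
Proof.
  intros Ha Hx; destruct (Req_dec x 0) as [-> | Hx0].
  - intros P [eps HP].
    assert (Hd : 0 < rpow eps (/ a)) by apply rpow_gt0, cond_pos.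
    exists (mkposreal _ Hd); intros y Hy; apply HP.
    change (Rabs (y - 0) < rpow eps (/ a)) in Hy.
    change (Rabs (rpow y a - rpow 0 a) < eps).
    rewrite (rpow_le0 0), Rminus_0_r, Rabs_pos_eq by (lra || apply rpow_ge0).
    rewrite Rminus_0_r in Hy.
    destruct (Rle_dec y 0) as [Hy0 | Hy0].
    + rewrite rpow_le0 by exact Hy0; apply cond_pos.
    + rewrite Rabs_pos_eq in Hy by lra.
      rewrite <- (rpow_1 eps), <- (Rinv_l a), <- rpow_rpow by (lra || apply cond_pos).
      apply rpow_lt_compat; lra.
  - apply continuous_ext_loc with (fun y => exp (a * ln y)).
    + assert (Hx' : 0 < x) by lra.
      exists (mkposreal x Hx'); intros y Hy.
      change (Rabs (y - x) < x) in Hy; apply Rabs_def2 in Hy.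
      symmetry; apply rpow_exp_ln; lra.
    + apply continuous_exp_comp, (continuous_scal_r a ln), continuous_ln; lra.
Qed.

Definition is_RInt_0_oo (f : R -> R) (l : R) :=
  (forall b, 0 <= b -> ex_RInt f 0 b) /\ is_lim (fun b => RInt f 0 b) p_infty l.

Lemma ex_RInt_0_continuous (f : R -> R) :
  (forall y, 0 <= y -> continuous f y) -> forall b, 0 <= b -> ex_RInt f 0 b.
Proof.
  intros Hf b Hb; apply (ex_RInt_continuous (V := R_CompleteNormedModule)).
  intros y Hy; rewrite Rmin_left in Hy by lra; apply Hf; lra.
Qed.

Lemma RInt_0_split (f : R -> R) a b : 0 <= a <= b -> ex_RInt f 0 b ->
  RInt f 0 b = RInt f 0 a + RInt f a b.
Proof.
  intros Hab Hf; symmetry; apply (RInt_Chasles (V := R_CompleteNormedModule)).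
  - apply (ex_RInt_Chasles_1 (V := R_CompleteNormedModule)) with b; [lra | exact Hf].
  - apply (ex_RInt_Chasles_2 (V := R_CompleteNormedModule)) with 0; [lra | exact Hf].
Qed.

Lemma RInt_0_le_compat (f : R -> R) a b :
  (forall b, 0 <= b -> ex_RInt f 0 b) -> (forall y, 0 <= y -> 0 <= f y) ->
  0 <= a <= b -> RInt f 0 a <= RInt f 0 b.
Proof.
  intros Hex Hf Hab; rewrite (RInt_0_split f a b) by (auto; apply Hex; lra).
  assert (0 <= RInt f a b); [| lra].
  apply RInt_ge_0; [lra | | intros; apply Hf; lra].
  apply (ex_RInt_Chasles_2 (V := R_CompleteNormedModule)) with 0; [lra | apply Hex; lra].
Qed.

Lemma is_RInt_0_oo_gen f l :
  is_RInt_0_oo f l -> is_RInt_gen f (at_point 0) (Rbar_locally p_infty) l.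
Proof.
  intros [Hex Hlim]; apply is_lim_spec in Hlim.
  intros P [eps HP]; destruct (Hlim eps) as [M HM].
  exists (fun x => x = 0) (fun b => Rmax M 0 < b); [reflexivity | exists (Rmax M 0); auto |].
  intros a b -> Hb; exists (RInt f 0 b); split.
  - apply (RInt_correct (V := R_CompleteNormedModule)), Hex.
    generalize (Rmax_r M 0); lra.
  - apply HP, HM; generalize (Rmax_l M 0); lra.
Qed.

Lemma is_RInt_0_oo_ext f g l :
  (forall y, 0 <= y -> f y = g y) -> is_RInt_0_oo f l -> is_RInt_0_oo g l.
Proof.
  intros Hfg [Hex Hlim]; split.
  - intros b Hb; apply ex_RInt_ext with f; auto.
    intros y Hy; rewrite Rmin_left in Hy by lra; apply Hfg; lra.
  - apply is_lim_ext_loc with (fun b => RInt f 0 b); auto.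
    exists 0; intros b Hb; apply RInt_ext.
    intros y Hy; rewrite Rmin_left in Hy by lra; apply Hfg; lra.
Qed.

Lemma is_RInt_0_oo_lin f g a b lf lg : is_RInt_0_oo f lf -> is_RInt_0_oo g lg ->
  is_RInt_0_oo (fun y => a * f y + b * g y) (a * lf + b * lg).
Proof.
  intros [Hf Lf] [Hg Lg].
  assert (Ea : forall x, 0 <= x -> ex_RInt (fun y => a * f y) 0 x)
    by (intros; apply (ex_RInt_scal f); auto).
  assert (Eb : forall x, 0 <= x -> ex_RInt (fun y => b * g y) 0 x)
    by (intros; apply (ex_RInt_scal g); auto).
  split.
  - intros x Hx; apply (ex_RInt_plus (fun y => a * f y) (fun y => b * g y)); auto.
  - apply is_lim_ext_loc with (fun x => a * RInt f 0 x + b * RInt g 0 x).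
    + exists 0; intros x Hx.
      rewrite (RInt_plus (V := R_CompleteNormedModule)) by (apply Ea || apply Eb; lra).
      rewrite !(RInt_scal (V := R_CompleteNormedModule)) by (apply Hf || apply Hg; lra).
      reflexivity.
    + eapply is_lim_plus; [apply is_lim_scal_l, Lf | apply is_lim_scal_l, Lg | reflexivity].
Qed.

Lemma is_RInt_0_oo_scal f k l : is_RInt_0_oo f l ->
  is_RInt_0_oo (fun y => k * f y) (k * l).
Proof.
  intros Hf; rewrite <- (Rplus_0_r (k * l)), <- (Rmult_0_l l).
  apply is_RInt_0_oo_ext with (fun y => k * f y + 0 * f y); [intros; ring |].
  apply is_RInt_0_oo_lin; exact Hf.
Qed.

Lemma is_RInt_0_oo_comp_scal f g lam l : 0 < lam ->
  (forall b, 0 <= b -> ex_RInt f 0 b) ->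
  (forall y, 0 <= y -> g y = lam * f (lam * y)) ->
  is_RInt_0_oo g l -> is_RInt_0_oo f l.
Proof.
  intros Hlam Hf Hfg [Hg Lg]; split; [exact Hf |].
  apply is_lim_ext_loc with (fun b => RInt g 0 (b / lam)).
  - exists 0; intros b Hb.
    rewrite (RInt_ext g (fun y => scal lam (f (lam * y + 0)))).
    + rewrite (RInt_comp_lin (V := R_CompleteNormedModule)).
      * f_equal; field; lra.
      * replace (lam * 0 + 0) with 0 by ring.
        replace (lam * (b / lam) + 0) with b by (field; lra); apply Hf; lra.
    + intros y Hy; rewrite Rmin_left in Hy by (apply Rdiv_le_0_compat; lra).
      rewrite Hfg, Rplus_0_r by lra; reflexivity.
  - apply (is_lim_comp (fun b => RInt g 0 b) (fun b => b / lam) p_infty l p_infty Lg).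
    + replace p_infty with (Rbar_mult p_infty (/ lam)) at 2
        by (apply is_Rbar_mult_unique, is_Rbar_mult_p_infty_pos, Rinv_0_lt_compat; exact Hlam).
      apply (is_lim_scal_r (fun b => b)), is_lim_id.
    + exists 0; intros; discriminate.
Qed.

Lemma is_RInt_0_oo_ge_RInt f l b : is_RInt_0_oo f l ->
  (forall y, 0 <= y -> 0 <= f y) -> 0 <= b -> RInt f 0 b <= l.
Proof.
  intros [Hex Hlim] Hf Hb.
  apply (is_lim_le_loc (fun _ => RInt f 0 b) (fun x => RInt f 0 x) p_infty
    (RInt f 0 b) l); [| apply is_lim_const | exact Hlim].
  exists b; intros x Hx; apply RInt_0_le_compat; auto; lra.
Qed.

Lemma is_RInt_0_oo_gt0 f l a b : is_RInt_0_oo f l ->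
  (forall y, 0 <= y -> 0 <= f y) -> (forall y, 0 <= y -> continuous f y) ->
  0 <= a < b -> (forall y, a < y < b -> 0 < f y) -> 0 < l.
Proof.
  intros Hl Hf Hc Hab Hpos.
  apply Rlt_le_trans with (RInt f 0 b); [| apply is_RInt_0_oo_ge_RInt; auto; lra].
  destruct Hl as [Hex _].
  rewrite (RInt_0_split f a b) by (lra || apply Hex; lra).
  assert (0 <= RInt f 0 a) by (apply RInt_ge_0; [lra | apply Hex | intros; apply Hf]; lra).
  assert (Hlt : RInt (fun _ => 0) a b < RInt f a b)
    by (apply RInt_lt; [lra | intros; apply Hc; lra | intros; apply continuous_const | exact Hpos]).
  rewrite RInt_const in Hlt; change ((b - a) * 0 < RInt f a b) in Hlt; lra.
Qed.

Lemma is_RInt_0_oo_ex_bounded f M :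
  (forall b, 0 <= b -> ex_RInt f 0 b) -> (forall y, 0 <= y -> 0 <= f y) ->
  (forall b, 0 <= b -> RInt f 0 b <= M) -> exists l, is_RInt_0_oo f l.
Proof.
  intros Hex Hf HM.
  set (E := fun v => exists b, 0 <= b /\ v = RInt f 0 b).
  assert (HE : bound E) by (exists M; intros v [b [Hb ->]]; auto).
  assert (HE0 : exists v, E v) by (exists (RInt f 0 0), 0; split; lra).
  destruct (completeness E HE HE0) as [L [HLub HLmin]].
  exists L; split; [exact Hex |].
  apply is_lim_spec; intros eps.
  assert (Happrox : exists b, 0 <= b /\ L - eps < RInt f 0 b).
  { apply Classical_Prop.NNPP; intros Hn.
    assert (L <= L - eps); [| generalize (cond_pos eps); lra].
    apply HLmin; intros v [b [Hb ->]].
    apply Rnot_lt_le; intros Hlt; apply Hn; exists b; auto. }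
  destruct Happrox as [b0 [Hb0 Hlt]]; exists b0; intros x Hx.
  assert (RInt f 0 x <= L) by (apply HLub; exists x; split; lra).
  assert (RInt f 0 b0 <= RInt f 0 x) by (apply RInt_0_le_compat; auto; lra).
  apply Rabs_def1; lra.
Qed.

Definition weibull_pdf (c y : R) : R := c / y * exp (c * ln y) * exp (- exp (c * ln y)).

Lemma is_RInt_weibull_pdf c a b : 0 < a <= b ->
  is_RInt (weibull_pdf c) a b (exp (- exp (c * ln a)) - exp (- exp (c * ln b))).
Proof.
  intros Hab.
  replace (exp (- exp (c * ln a)) - exp (- exp (c * ln b)))
    with (minus (- exp (- exp (c * ln b))) (- exp (- exp (c * ln a))))
    by (unfold minus, plus, opp; simpl; ring).
  apply (is_RInt_derive (fun y => - exp (- exp (c * ln y))));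
    intros y Hy; rewrite Rmin_left, Rmax_right in Hy by lra.
  - auto_derive; [lra |]; unfold weibull_pdf; field; lra.
  - apply (ex_derive_continuous (weibull_pdf c)); unfold weibull_pdf; auto_derive; lra.
Qed.

Lemma RInt_0_le_weibull_majorant c M f : 0 < c ->
  (forall b, 0 <= b -> ex_RInt f 0 b) -> (forall y, 0 <= y -> 0 <= f y) ->
  (forall y, 0 <= y <= 1 -> f y <= M) ->
  (forall y, 1 <= y -> f y <= / c * weibull_pdf c y) ->
  forall b, 0 <= b -> RInt f 0 b <= M + / c.
Proof.
  intros Hc Hex Hf Hhead Htail b Hb.
  assert (HM : 0 <= M) by (apply Rle_trans with (f 0); [apply Hf | apply Hhead]; lra).
  assert (Hc' : 0 < / c) by (apply Rinv_0_lt_compat, Hc).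
  assert (Hhead_int : forall b, 0 <= b <= 1 -> RInt f 0 b <= M).
  { intros b' Hb'; apply Rle_trans with (RInt (fun _ => M) 0 b').
    - apply RInt_le; [lra | apply Hex; lra | apply ex_RInt_const | intros; apply Hhead; lra].
    - rewrite RInt_const; change ((b' - 0) * M <= M); nra. }
  destruct (Rle_dec b 1) as [Hb1 | Hb1]; [apply Rle_trans with M; [apply Hhead_int |]; lra |].
  rewrite (RInt_0_split f 1 b) by (lra || apply Hex; lra).
  assert (Hpdf := is_RInt_weibull_pdf c 1 b ltac:(lra)).
  assert (RInt f 1 b <= / c); [| generalize (Hhead_int 1 ltac:(lra)); lra].
  apply Rle_trans with (RInt (fun y => / c * weibull_pdf c y) 1 b).
  - apply RInt_le; [lra | | apply (ex_RInt_scal (weibull_pdf c)); eexists; exact Hpdf |].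
    + apply (ex_RInt_Chasles_2 (V := R_CompleteNormedModule)) with 0; [lra | apply Hex; lra].
    + intros; apply Htail; lra.
  - rewrite (RInt_scal (V := R_CompleteNormedModule)) by (eexists; exact Hpdf).
    rewrite (is_RInt_unique _ _ _ _ Hpdf), ln_1, Rmult_0_r, exp_0.
    assert (0 < exp (- exp (c * ln b))) by apply exp_pos.
    assert (He1 := exp_increasing (- (1)) 0 ltac:(lra)); rewrite exp_0 in He1.
    change (/ c * (exp (- (1)) - exp (- exp (c * ln b))) <= / c).
    apply Rle_trans with (/ c * 1); [apply Rmult_le_compat_l |]; lra.
Qed.

Lemma ex_is_RInt_0_oo_weibull_majorant c M f : 0 < c ->
  (forall y, 0 <= y -> continuous f y) -> (forall y, 0 <= y -> 0 <= f y) ->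
  (forall y, 0 <= y <= 1 -> f y <= M) ->
  (forall y, 1 <= y -> f y <= / c * weibull_pdf c y) ->
  exists l, is_RInt_0_oo f l.
Proof.
  intros Hc Hcont Hf Hhead Htail.
  assert (Hex := ex_RInt_0_continuous f Hcont).
  apply is_RInt_0_oo_ex_bounded with (M + / c); auto.
  apply RInt_0_le_weibull_majorant; auto.
Qed.

Lemma mul_exp_neg_le1 t : 0 <= t -> t * exp (- t) <= 1.
Proof.
  intros Ht; rewrite exp_Ropp.
  assert (Hle : t <= exp t).
  { destruct (Req_dec t 0) as [-> | Ht0]; [rewrite exp_0; lra |].
    generalize (exp_ineq1 t Ht0); lra. }
  apply Rmult_le_reg_r with (exp t); [apply exp_pos |].
  rewrite Rmult_assoc, Rinv_l, Rmult_1_r, Rmult_1_l by (apply Rgt_not_eq, exp_pos); exact Hle.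
Qed.

(* After the substitution [x = y / mu] with [mu^c = s1 + s2], the integrands of [I0] and [I1]
   become [K0 c mu] and [K1 c mu] (up to the factor [1 / mu^c] for [I1]). *)
Definition K0 (c mu y : R) : R := exp (- rpow y c) / (mu + y).

Definition K1 (c mu y : R) : R := rpow y c * K0 c mu y.

Section Kernels.

Variables c mu : R.
Hypothesis Hc : 0 < c.
Hypothesis Hmu : 0 < mu.

Lemma K0_gt0 y : 0 <= y -> 0 < K0 c mu y.
Proof. intros Hy; apply Rdiv_lt_0_compat; [apply exp_pos | lra]. Qed.

Lemma K1_ge0 y : 0 <= y -> 0 <= K1 c mu y.
Proof. intros Hy; apply Rmult_le_pos; [apply rpow_ge0 | apply Rlt_le, K0_gt0, Hy]. Qed.

Lemma K1_gt0 y : 0 < y -> 0 < K1 c mu y.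
Proof. intros Hy; apply Rmult_lt_0_compat; [apply rpow_gt0, Hy | apply K0_gt0; lra]. Qed.

Lemma continuous_K0 y : 0 <= y -> continuous (K0 c mu) y.
Proof.
  intros Hy; apply (continuous_mult (fun y => exp (- rpow y c))).
  - apply continuous_exp_comp, (continuous_opp (fun y => rpow y c)), continuous_rpow; auto.
  - apply continuous_Rinv_comp; [| lra].
    apply (continuous_plus (fun _ => mu) (fun y => y)); [apply continuous_const | apply continuous_id].
Qed.

Lemma continuous_K1 y : 0 <= y -> continuous (K1 c mu) y.
Proof.
  intros Hy; apply (continuous_mult (fun y => rpow y c)); [apply continuous_rpow | apply continuous_K0]; auto.
Qed.

Lemma K0_le_inv y : 0 <= y -> K0 c mu y <= / mu.
Proof.
  intros Hy; unfold K0, Rdiv.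
  assert (Hle : exp (- rpow y c) <= 1).
  { rewrite <- exp_0; destruct (rpow_ge0 y c) as [Hpos | <-]; [| rewrite Ropp_0; lra].
    apply Rlt_le, exp_increasing; lra. }
  apply Rle_trans with (1 * / (mu + y)); [apply Rmult_le_compat_r |].
  - apply Rlt_le, Rinv_0_lt_compat; lra.
  - exact Hle.
  - rewrite Rmult_1_l; apply Rinv_le_contravar; lra.
Qed.

Lemma K1_le_inv y : 0 <= y -> K1 c mu y <= / mu.
Proof.
  intros Hy; unfold K1, K0, Rdiv; rewrite <- Rmult_assoc.
  assert (Hinv : 0 < / (mu + y)) by (apply Rinv_0_lt_compat; lra).
  apply Rle_trans with (1 * / (mu + y)).
  - apply Rmult_le_compat_r; [lra | apply mul_exp_neg_le1, rpow_ge0].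
  - rewrite Rmult_1_l; apply Rinv_le_contravar; lra.
Qed.

Lemma K1_le_weibull_pdf y : 1 <= y -> K1 c mu y <= / c * weibull_pdf c y.
Proof.
  intros Hy; unfold K1, K0, weibull_pdf; rewrite rpow_exp_ln by lra.
  set (P := exp (c * ln y)).
  assert (0 < P) by apply exp_pos.
  assert (0 < exp (- P)) by apply exp_pos.
  replace (/ c * (c / y * P * exp (- P))) with (P * exp (- P) / y) by (field; lra).
  unfold Rdiv; rewrite <- Rmult_assoc; apply Rmult_le_compat_l; [nra |].
  apply Rinv_le_contravar; lra.
Qed.

Lemma K0_le_K1 y : 1 <= y -> K0 c mu y <= K1 c mu y.
Proof.
  intros Hy; unfold K1; rewrite <- (Rmult_1_l (K0 c mu y)) at 1.
  apply Rmult_le_compat_r; [apply Rlt_le, K0_gt0; lra | apply rpow_ge1; lra].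
Qed.

Lemma ex_is_RInt_0_oo_K0 : exists l, is_RInt_0_oo (K0 c mu) l.
Proof.
  apply ex_is_RInt_0_oo_weibull_majorant with c (/ mu); auto.
  - apply continuous_K0.
  - intros y Hy; apply Rlt_le, K0_gt0, Hy.
  - intros y Hy; apply K0_le_inv; lra.
  - intros y Hy; eapply Rle_trans; [apply K0_le_K1 | apply K1_le_weibull_pdf]; exact Hy.
Qed.

Lemma ex_is_RInt_0_oo_K1 : exists l, is_RInt_0_oo (K1 c mu) l.
Proof.
  apply ex_is_RInt_0_oo_weibull_majorant with c (/ mu); auto.
  - apply continuous_K1.
  - apply K1_ge0.
  - intros y Hy; apply K1_le_inv; lra.
  - apply K1_le_weibull_pdf.
Qed.

Lemma is_RInt_0_oo_K0_gt0 l : is_RInt_0_oo (K0 c mu) l -> 0 < l.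
Proof.
  intros Hl; apply is_RInt_0_oo_gt0 with (K0 c mu) 0 1; auto; try lra.
  - intros y Hy; apply Rlt_le, K0_gt0, Hy.
  - apply continuous_K0.
  - intros y Hy; apply K0_gt0; lra.
Qed.

Lemma is_RInt_0_oo_K1_gt0 l : is_RInt_0_oo (K1 c mu) l -> 0 < l.
Proof.
  intros Hl; apply is_RInt_0_oo_gt0 with (K1 c mu) 0 1; auto; try lra.
  - apply K1_ge0.
  - apply continuous_K1.
  - intros y Hy; apply K1_gt0; lra.
Qed.

End Kernels.

Lemma continuous_lin_comb (f g : R -> R) a b y : continuous f y -> continuous g y ->
  continuous (fun y => a * f y + b * g y) y.
Proof.
  intros Hf Hg; apply (continuous_plus (fun y => a * f y) (fun y => b * g y));
    [apply (continuous_scal_r a f) | apply (continuous_scal_r b g)]; assumption.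
Qed.

Lemma rpow_sub_mul_sub_ge0 c x y : 0 < c -> 0 <= x -> 0 <= y ->
  0 <= (rpow x c - rpow y c) * (x - y).
Proof.
  intros Hc Hx Hy; destruct (Rtotal_order x y) as [Hxy | [-> | Hxy]].
  - assert (rpow x c < rpow y c) by (apply rpow_lt_compat; auto); nra.
  - lra.
  - assert (rpow y c < rpow x c) by (apply rpow_lt_compat; auto); nra.
Qed.

(* With [y0^c = a1 / b1] the old mean, the combination [g] below of the four integrands equals
   [(y^c - y0^c) (y - y0)] times a positive weight; its integral is positive and reduces to
   [a2 - (a1 / b1) b2]. *)
Lemma K_ratio_lt c mu nu a1 b1 a2 b2 : 0 < c -> 0 < mu < nu ->
  is_RInt_0_oo (K1 c mu) a1 -> is_RInt_0_oo (K0 c mu) b1 ->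
  is_RInt_0_oo (K1 c nu) a2 -> is_RInt_0_oo (K0 c nu) b2 ->
  a1 * b2 < a2 * b1.
Proof.
  intros Hc Hmunu HA1 HB1 HA2 HB2.
  assert (Ha1 : 0 < a1) by exact (is_RInt_0_oo_K1_gt0 c mu Hc ltac:(lra) a1 HA1).
  assert (Hb1 : 0 < b1) by exact (is_RInt_0_oo_K0_gt0 c mu Hc ltac:(lra) b1 HB1).
  set (m := a1 / b1).
  destruct (rpow_surj m c Hc) as [y0 [Hy0 Hm]]; [apply Rdiv_lt_0_compat; auto |].
  set (k := (mu + y0) / (nu + y0)).
  set (w := fun y => (nu - mu) * exp (- rpow y c) / ((nu + y) * (mu + y) * (nu + y0))).
  assert (Hw : forall y, 0 <= y -> 0 < w y).
  { intros y Hy; apply Rdiv_lt_0_compat; [apply Rmult_lt_0_compat; [lra | apply exp_pos] |].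
    repeat apply Rmult_lt_0_compat; lra. }
  assert (Hg := is_RInt_0_oo_lin _ _ 1 (- k) _ _
                  (is_RInt_0_oo_lin _ _ 1 (- m) _ _ HA2 HB2)
                  (is_RInt_0_oo_lin _ _ 1 (- m) _ _ HA1 HB1)).
  set (g := fun y => 1 * (1 * K1 c nu y + - m * K0 c nu y)
                      + - k * (1 * K1 c mu y + - m * K0 c mu y)) in Hg.
  assert (Hg_eq : forall y, 0 <= y -> g y = (rpow y c - rpow y0 c) * (y - y0) * w y)
    by (intros y Hy; rewrite Hm; unfold g, K1, K0, w, k; field; lra).
  apply is_RInt_0_oo_gt0 with (a := y0) (b := y0 + 1) in Hg; try lra.
  - replace (1 * a1 + - m * b1) with 0 in Hg by (unfold m; field; lra).
    unfold m in Hg; apply Rmult_lt_reg_r with (/ b1); [apply Rinv_0_lt_compat, Hb1 |].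
    replace (a2 * b1 * / b1) with a2 by (field; lra).
    replace (a1 * b2 * / b1) with (a1 / b1 * b2) by (field; lra); lra.
  - intros y Hy; rewrite Hg_eq by exact Hy.
    apply Rmult_le_pos; [apply rpow_sub_mul_sub_ge0 | apply Rlt_le, Hw]; lra.
  - intros y Hy; unfold g.
    repeat apply continuous_lin_comb; (apply continuous_K0 || apply continuous_K1); lra.
  - intros y Hy; rewrite Hg_eq by lra.
    apply Rmult_lt_0_compat; [| apply Hw; lra].
    assert (rpow y0 c < rpow y c) by (apply rpow_lt_compat; lra); nra.
Qed.

Section Rescaling.

Variables alpha u : R.
Hypothesis Halpha : 0 < alpha.
Hypothesis Hu : 0 < u.

Let c := 2 / alpha.
Let mu := rpow u (alpha / 2).

Lemma rpow_inv_scale : rpow (/ mu) c = / u.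
Proof.
  unfold mu, c; rewrite rpow_inv, rpow_rpow by (auto; apply rpow_gt0, Hu).
  replace (alpha / 2 * (2 / alpha)) with 1 by (field; lra); rewrite rpow_1; auto.
Qed.

Lemma rpow_scale_mu y : 0 <= y -> rpow (/ mu * y) c = / u * rpow y c.
Proof.
  intros Hy; rewrite rpow_mult, rpow_inv_scale by (auto; apply Rinv_0_lt_compat, rpow_gt0, Hu).
  reflexivity.
Qed.

Lemma I0_rescale b : is_RInt_0_oo (K0 c mu) b -> I0 alpha u = b.
Proof.
  intros Hb; apply is_RInt_gen_unique, is_RInt_0_oo_gen.
  assert (Hmu : 0 < mu) by apply rpow_gt0, Hu.
  apply is_RInt_0_oo_comp_scal with (K0 c mu) (/ mu); auto.
  - apply Rinv_0_lt_compat, Hmu.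
  - apply ex_RInt_0_continuous; intros y Hy.
    apply (continuous_mult (fun y => exp (- u * rpow y (2 / alpha)))).
    + apply continuous_exp_comp, (continuous_scal_r (- u) (fun y => rpow y (2 / alpha))).
      apply continuous_rpow; [apply Rdiv_lt_0_compat |]; lra.
    + apply continuous_Rinv_comp; [| lra].
      apply (continuous_plus (fun _ => 1) (fun y => y)); [apply continuous_const | apply continuous_id].
  - intros y Hy; fold c; rewrite rpow_scale_mu by exact Hy.
    replace (- u * (/ u * rpow y c)) with (- rpow y c) by (field; lra).
    unfold K0; field; lra.
Qed.

Lemma I1_rescale a : is_RInt_0_oo (K1 c mu) a -> I1 alpha u = a / u.
Proof.
  intros Ha; apply is_RInt_gen_unique, is_RInt_0_oo_gen.
  assert (Hmu : 0 < mu) by apply rpow_gt0, Hu.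
  apply is_RInt_0_oo_comp_scal with (fun y => / u * K1 c mu y) (/ mu); auto.
  - apply Rinv_0_lt_compat, Hmu.
  - apply ex_RInt_0_continuous; intros y Hy.
    assert (Hrpow : continuous (fun y => rpow y (2 / alpha)) y)
      by (apply continuous_rpow; [apply Rdiv_lt_0_compat |]; lra).
    apply (continuous_mult (fun y => rpow y (2 / alpha) * exp (- u * rpow y (2 / alpha)))).
    + apply (continuous_mult (fun y => rpow y (2 / alpha))); [exact Hrpow |].
      apply continuous_exp_comp, (continuous_scal_r (- u) (fun y => rpow y (2 / alpha))), Hrpow.
    + apply continuous_Rinv_comp; [| lra].
      apply (continuous_plus (fun _ => 1) (fun y => y)); [apply continuous_const | apply continuous_id].
  - intros y Hy; fold c; rewrite rpow_scale_mu by exact Hy.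
    replace (- u * (/ u * rpow y c)) with (- rpow y c) by (field; lra).
    unfold K1, K0; field; lra.
  - replace (a / u) with (/ u * a) by (field; lra).
    apply is_RInt_0_oo_scal, Ha.
Qed.

End Rescaling.

Lemma fratio_diag alpha t a b : 0 < alpha -> 0 < t ->
  is_RInt_0_oo (K1 (2 / alpha) (rpow (t + t) (alpha / 2))) a ->
  is_RInt_0_oo (K0 (2 / alpha) (rpow (t + t) (alpha / 2))) b ->
  fratio alpha t t = 2 * b / a.
Proof.
  intros Halpha Ht Ha Hb.
  assert (Ha_pos : 0 < a).
  { apply (is_RInt_0_oo_K1_gt0 (2 / alpha) (rpow (t + t) (alpha / 2))); auto.
    - apply Rdiv_lt_0_compat; lra.
    - apply rpow_gt0; lra. }
  assert (Htt : 0 < t + t) by lra.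
  unfold fratio; rewrite (I0_rescale alpha (t + t) Halpha Htt b Hb).
  rewrite (I1_rescale alpha (t + t) Halpha Htt a Ha); field; lra.
Qed.

Theorem lemma1 (alpha : R) (halpha : 2 < alpha) :
  forall s t : R, 0 < s -> s < t -> fratio alpha t t < fratio alpha s s.
Proof.
  intros s t Hs Hst.
  set (c := 2 / alpha).
  set (mu_s := rpow (s + s) (alpha / 2)).
  set (mu_t := rpow (t + t) (alpha / 2)).
  assert (Hc : 0 < c) by (apply Rdiv_lt_0_compat; lra).
  assert (Hmu_s : 0 < mu_s) by (apply rpow_gt0; lra).
  assert (Hmu : mu_s < mu_t) by (apply rpow_lt_compat; lra).
  destruct (ex_is_RInt_0_oo_K1 c mu_s Hc Hmu_s) as [a1 Ha1].
  destruct (ex_is_RInt_0_oo_K0 c mu_s Hc Hmu_s) as [b1 Hb1].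
  destruct (ex_is_RInt_0_oo_K1 c mu_t Hc ltac:(lra)) as [a2 Ha2].
  destruct (ex_is_RInt_0_oo_K0 c mu_t Hc ltac:(lra)) as [b2 Hb2].
  assert (Ha1_pos := is_RInt_0_oo_K1_gt0 c mu_s Hc Hmu_s a1 Ha1).
  assert (Ha2_pos := is_RInt_0_oo_K1_gt0 c mu_t Hc ltac:(lra) a2 Ha2).
  assert (Hratio := K_ratio_lt c mu_s mu_t a1 b1 a2 b2 Hc ltac:(lra) Ha1 Hb1 Ha2 Hb2).
  rewrite (fratio_diag alpha t a2 b2), (fratio_diag alpha s a1 b1) by (auto; lra).
  apply Rmult_lt_reg_r with (a1 * a2); [nra |].
  replace (2 * b2 / a2 * (a1 * a2)) with (2 * (a1 * b2)) by (field; lra).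
  replace (2 * b1 / a1 * (a1 * a2)) with (2 * (a2 * b1)) by (field; lra).
  lra.
Qed.
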